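(* Let $F$ be a unital formal multiplication on $V$ with associated product $\cdot$ on $k[F]$. For all $x,y\in V$ and $\mu\in k[V]$, $$T(x^*,y^* )(\mu)=\pi_V\big((\mu\cdot y)\cdot x-(\mu\cdot x)\cdot y\big).$$
   Context: $k$ is a field of characteristic $0$; $k[V]$ is the symmetric algebra of $V$ with the coalgebra structure in which elements of $V$ are primitive, counit $\epsilon$, projection $\pi_V$ onto $V$; Sweedler notation. $F\colon k[V]\otimes k[V]\to V$ is unital ($F(\mu\otimes1)=\pi_V(\mu)=F(1\otimes\mu)$), $F'$ its induced coalgebra morphism $F'(\xi)=\sum_{n\ge0}\frac1{n!}F(\xi_{(1)})\cdots F(\xi_{(n)})$, and $\mu\cdot\nu=F'(\mu\otimes\nu)$. Formal vector fields are linear maps $A\colon k[V]\to V$; their bracket is $[A,B](\mu)=\sum B\big(\mu_{(1)}A(\mu_{(2)})\big)-A\big(\mu_{(1)}B(\mu_{(2)})\big)$ (products in the symmetric algebra). Connection: $\mu*v=F(\mu\otimes v)$ for $v\in V$; $\mu\backslash^*u$ is the unique map $k[V]\otimes V\to V$ with $\sum\mu_{(1)}\backslash^*(\mu_{(2)}*v)=\epsilon(\mu)v=\sum\mu_{(1)}*(\mu_{(2)}\backslash^*v)$. Covariant derivative: $\nabla_A(B)(\mu)=\sum B\big(\mu_{(1)}A(\mu_{(2)})\big)-\big(\mu_{(1)}A(\mu_{(2)})\big)*\big(\mu_{(3)}\backslash^*B(\mu_{(4)})\big)$. Torsion: $T(A,B)=\nabla_A(B)-\nabla_B(A)-[A,B]$.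 Adapted field: $v^*(\mu)=\mu*v$. *)

From HB Require Import structures.
From mathcomp Require Import all_boot all_order all_algebra.
Set Implicit Arguments. Unset Strict Implicit. Unset Printing Implicit Defensive.
Import Order.TTheory GRing.Theory Num.Theory.
Local Open Scope ring_scope.

(* A monomial v_1 ... v_n of k[V] is represented by the word [:: v_1; ...; v_n]*)
(* (the empty word is 1).  A general element of k[V] is represented by a     *)
(* finite formal linear combination of words, i.e. an element of              *)
(* kV V := seq (k * seq V).  A linear map k[V] -> W is the same thing as a    *)
(* family of symmetric multilinear maps V^n -> W, i.e. a function             *)
(* seq V -> W which is symmetric and multilinear (SymMultilin); it is applied *)
(* to combinations by linear extension (lext).  Likewise a linear map         *)
(* k[V] (x) k[V] -> V is a function seq V -> seq V -> V that is symmetric     *)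
(* multilinear in each argument.                                              *)
(* The coproduct (elements of V primitive) of a monomial w is                 *)
(*   Delta(w) = sum over ways of dealing the letters of w into 2 piles,       *)
(* and the iterated coproduct Delta^(m) uses m piles ([deal m w]).            *)

Section FormalMult.
Variables (k : fieldType) (V : lmodType k).

Definition kV := seq (k * seq V).

Fixpoint deal (m : nat) (w : seq V) : seq (seq (seq V)) :=
  match w with
  | [::] => [:: nseq m [::]]
  | v :: w' =>
      flatten [seq [seq set_nth [::] piles i (v :: nth [::] piles i) | i <- iota 0 m]
              | piles <- deal m w']
  end.

Definition pile (p : seq (seq V)) (i : nat) : seq V := nth [::] p i.

Definition SymMultilin (W : lmodType k) (f : seq V -> W) : Prop :=
  (forall a b : seq V, perm_eq a b -> f a = f b) /\
  (forall (a1 a2 : seq V) (c : k) (u v : V),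
      f (a1 ++ (c *: u + v) :: a2) = c *: f (a1 ++ u :: a2) + f (a1 ++ v :: a2)).

Definition lext (W : lmodType k) (f : seq V -> W) (mu : kV) : W :=
  \sum_(p <- mu) p.1 *: f p.2.

Definition vec (v : V) : kV := [:: (1, [:: v])].

Definition ksub (mu nu : kV) : kV := mu ++ [seq (- p.1, p.2) | p <- nu].

Definition piVw (w : seq V) : V := if w is [:: v] then v else 0.
Definition piV (mu : kV) : V := lext piVw mu.

Definition is_bilinear_map (F : seq V -> seq V -> V) : Prop :=
  (forall b, SymMultilin (fun a => F a b)) /\ (forall a, SymMultilin (F a)).

Definition unital (F : seq V -> seq V -> V) : Prop :=
  forall w : seq V, F w [::] = piVw w /\ F [::] w = piVw w.

(* F'(a (x) b) = sum_n 1/n! F(xi_(1)) ... F(xi_(n)), xi = a (x) b, where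
   xi_(i) = a_(i) (x) b_(i).  Terms with n > size a + size b vanish, since they
   contain a factor F(1 (x) 1) = pi_V(1) = 0 (unitality), so the sum is
   truncated there. *)
Definition Fprime (F : seq V -> seq V -> V) (a b : seq V) : kV :=
  flatten [seq [seq ((n`!)%:R^-1, [seq F (pile pa i) (pile pb i) | i <- iota 0 n])
               | pa <- deal n a, pb <- deal n b]
          | n <- iota 0 (size a + size b).+1].

Definition fmul (F : seq V -> seq V -> V) (mu nu : kV) : kV :=
  flatten [seq [seq (p.1 * q.1 * r.1, r.2) | r <- Fprime F p.2 q.2]
          | p <- mu, q <- nu].

(* the left division  mu \* u : k[V] (x) V -> V  (given as a linear map),
   characterised by  sum mu_(1) \* (mu_(2) * v) = eps(mu) v
                    = sum mu_(1) * (mu_(2) \* v),   where mu * v = F(mu (x) v) *)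
Definition is_left_division (F : seq V -> seq V -> V) (ld : seq V -> V -> V) : Prop :=
  (forall v, SymMultilin (fun w => ld w v)) /\
  (forall w (c : k) (u v : V), ld w (c *: u + v) = c *: ld w u + ld w v) /\
  (forall (w : seq V) (v : V),
     \sum_(p <- deal 2 w) ld (pile p 0) (F (pile p 1) [:: v])
       = (if w is [::] then v else 0)) /\
  (forall (w : seq V) (v : V),
     \sum_(p <- deal 2 w) F (pile p 0) [:: ld (pile p 1) v]
       = (if w is [::] then v else 0)).

(* formal vector fields are linear maps k[V] -> V, given on monomials *)
Definition bracket (A B : seq V -> V) (w : seq V) : V :=
  \sum_(p <- deal 2 w) (B (pile p 0 ++ [:: A (pile p 1)])
                        - A (pile p 0 ++ [:: B (pile p 1)])).

Definition nabla (F : seq V -> seq V -> V) (ld : seq V -> V -> V)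
    (A B : seq V -> V) (w : seq V) : V :=
  \sum_(p <- deal 2 w) B (pile p 0 ++ [:: A (pile p 1)])
  - \sum_(p <- deal 4 w)
      F (pile p 0 ++ [:: A (pile p 1)]) [:: ld (pile p 2) (B (pile p 3))].

Definition torsion (F : seq V -> seq V -> V) (ld : seq V -> V -> V)
    (A B : seq V -> V) (w : seq V) : V :=
  nabla F ld A B w - nabla F ld B A w - bracket A B w.

(* adapted field  v^*(mu) = mu * v *)
Definition adapted (F : seq V -> seq V -> V) (v : V) : seq V -> V :=
  fun w => F w [:: v].

End FormalMult.

From HB Require Import structures.
From mathcomp Require Import all_boot all_order all_algebra.
From Stdlib Require Import FunctionalExtensionality.
Set Implicit Arguments. Unset Strict Implicit. Unset Printing Implicit Defensive.
Import GRing.Theory.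
Local Open Scope ring_scope.

(* The proof combines
   three independent facts.
   1. Combinatorics of dealing: the coproduct is counital and coassociative,
      and dealing into n+1 piles is dealing into two piles and then dealing
      the first of them into n piles ([sum_deal_split]).
   2. Adapted fields are parallel: nabla_A(y^* ) = 0 for every field A, since
      by coassociativity and the defining identity of the left division the
      second term of nabla collapses onto the first ([nabla_adapted]).  Hence
      T(x^*,y^* )(w) = sum (w_(1) (w_(2) * y)) * x - (w_(1) (w_(2) * x)) * y.
   3. Multiplying by a vector: for H symmetric multilinear, H applied to
      F'(w (x) y) is sum H(w_(1) (w_(2) * y)) ([lext_Fprime_vec]).  In the
      n-th term of F' the letter y falls into one of n piles; every other pile
      contributes pi_V, so only dealings of the rest of w into singletons
      survive; they come (n-1)! times each, and with the n choices of the pile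
      of y this cancels the factor 1/n!.  Moreover pi_V(F'(u (x) x)) = u * x.
   Facts 2 and 3 evaluate both sides of the theorem on every monomial. *)

(* [pile] is [nth]; keep it folded so that piles are manipulated as functions *)
Arguments pile : simpl never.

Lemma iota_cut_succ j n : (j <= n)%N ->
  iota 0 n.+1 = iota 0 j ++ j :: [seq 1 + i | i <- iota j (n - j)]%N.
Proof. by move=> le_jn; rewrite -iotaDl add1n -{1}(subnKC (leqW le_jn)) iotaD add0n subSn. Qed.

Lemma iota_cut j n : (j <= n)%N -> iota 0 n = iota 0 j ++ iota j (n - j).
Proof. by move=> le_jn; rewrite -{1}(subnKC le_jn) iotaD. Qed.

Section PileFamilies.
Variable T : Type.

Definition push (f : nat -> seq T) (i : nat) (v : T) : nat -> seq T :=
  fun m => if m == i then v :: f m else f m.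

Definition insert_pile (j : nat) (b : seq T) (f : nat -> seq T) : nat -> seq T :=
  fun i => if (i < j)%N then f i else if i == j then b else f i.-1.

Lemma push_insert_lt j b f i v : (i < j)%N ->
  push (insert_pile j b f) i v = insert_pile j b (push f i v).
Proof.
move=> lt_ij; apply: functional_extensionality => m; rewrite /push /insert_pile.
case: (ltngtP m j) => [//|lt_jm|->]; last by rewrite (gtn_eqF lt_ij).
case: m lt_jm => [//|m] lt_jm /=.
have lt_im : (i < m)%N := leq_trans lt_ij lt_jm.
by rewrite (gtn_eqF (leqW lt_im)) (gtn_eqF lt_im).
Qed.

Lemma push_insert_eq j b f v :
  push (insert_pile j b f) j v = insert_pile j (v :: b) f.
Proof.
apply: functional_extensionality => m; rewrite /push /insert_pile.
by case: (ltngtP m j).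
Qed.

Lemma push_insert_gt j b f i v : (j <= i)%N ->
  push (insert_pile j b f) i.+1 v = insert_pile j b (push f i v).
Proof.
move=> le_ji; apply: functional_extensionality => m; rewrite /push /insert_pile.
case: (ltngtP m j) => [lt_mj|lt_jm|->].
- by rewrite (ltn_eqF (leq_trans lt_mj (leqW le_ji))) (ltn_eqF (leq_trans lt_mj le_ji)).
- by case: m lt_jm => [//|m] _ /=; rewrite eqSS.
- by rewrite (ltn_eqF (leq_ltn_trans le_ji (ltnSn i))).
Qed.

Lemma sum_push_insert (R : zmodType) (Phi : (nat -> seq T) -> R) n j b f v :
  (j <= n)%N ->
  \sum_(i <- iota 0 n.+1) Phi (push (insert_pile j b f) i v) =
  \sum_(i <- iota 0 n) Phi (insert_pile j b (push f i v))
    + Phi (insert_pile j (v :: b) f).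
Proof.
move=> le_jn.
rewrite (iota_cut_succ le_jn) (iota_cut le_jn).
rewrite !big_cat big_cons big_map /= push_insert_eq -addrA [X in _ + X]addrC.
congr (_ + (_ + _)); apply: eq_big_seq => i; rewrite mem_iota.
  by move=> /= lt_ij; rewrite push_insert_lt.
by move=> /andP [le_ji _]; rewrite add1n push_insert_gt.
Qed.

End PileFamilies.

Section Dealing.
Variables (k : fieldType) (V : lmodType k).

Lemma pile_push (p : seq (seq V)) i v :
  pile (set_nth [::] p i (v :: nth [::] p i)) = push (pile p) i v.
Proof.
apply: functional_extensionality => m; rewrite /pile /push nth_set_nth /=.
by case: eqP => [->|].
Qed.

Lemma pile_empty m : pile (nseq m ([::] : seq V)) = fun _ => [::].
Proof. by apply: functional_extensionality => i; rewrite /pile nth_nseq; case: ifP. Qed.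

Lemma sum_deal_cons (R : zmodType) m v (w : seq V) (Phi : (nat -> seq V) -> R) :
  \sum_(p <- deal m (v :: w)) Phi (pile p) =
  \sum_(p <- deal m w) \sum_(i <- iota 0 m) Phi (push (pile p) i v).
Proof.
rewrite /= big_flatten /= big_map; apply: eq_bigr => p _.
by rewrite big_map; apply: eq_bigr => i _; rewrite pile_push.
Qed.

Lemma sum_deal2_cons (R : zmodType) v (w : seq V) (G : seq V -> seq V -> R) :
  \sum_(q <- deal 2 (v :: w)) G (pile q 0) (pile q 1) =
  \sum_(q <- deal 2 w) (G (v :: pile q 0) (pile q 1) + G (pile q 0) (v :: pile q 1)).
Proof.
rewrite (sum_deal_cons 2 v w (fun g => G (g 0%N) (g 1%N))); apply: eq_bigr => q _.
by rewrite /= big_cons big_cons big_nil addr0 /push.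
Qed.

Lemma size_pile_deal m (w : seq V) p :
  p \in deal m w -> forall i, (size (pile p i) <= size w)%N.
Proof.
elim: w m p => [|v w IH] m p /=.
  by rewrite inE => /eqP -> i; rewrite pile_empty.
move=> /flattenP [s /mapP [piles Hp ->]] /mapP [i _ ->] j.
rewrite pile_push /push; case: (j == i) => /=; last exact: leqW (IH _ _ Hp j).
exact: (IH _ _ Hp j).
Qed.

Lemma counit_deal2 (R : zmodType) (w : seq V) (Psi : seq V -> R) :
  \sum_(q <- deal 2 w) (if pile q 1 is [::] then Psi (pile q 0) else 0) = Psi w.
Proof.
elim: w Psi => [|v w IH] Psi; first by rewrite /= big_seq1.
rewrite (sum_deal2_cons v w (fun a b => if b is [::] then Psi a else 0)).
by rewrite -(IH (fun a => Psi (v :: a))); apply: eq_bigr => q _; rewrite addr0.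
Qed.

Lemma coassoc_deal2 (R : zmodType) (w : seq V) (G : seq V -> seq V -> seq V -> R) :
  \sum_(q <- deal 2 w) \sum_(s <- deal 2 (pile q 0)) G (pile s 0) (pile s 1) (pile q 1) =
  \sum_(q <- deal 2 w) \sum_(s <- deal 2 (pile q 1)) G (pile q 0) (pile s 0) (pile s 1).
Proof.
elim: w G => [|v w IH] G; first by rewrite /= !big_seq1.
rewrite (sum_deal2_cons v w (fun a b => \sum_(s <- deal 2 a) G (pile s 0) (pile s 1) b)).
rewrite (sum_deal2_cons v w (fun a b => \sum_(s <- deal 2 b) G a (pile s 0) (pile s 1))).
transitivity (\sum_(q <- deal 2 w) \sum_(s <- deal 2 (pile q 0))
   ((G (v :: pile s 0) (pile s 1) (pile q 1) + G (pile s 0) (v :: pile s 1) (pile q 1))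
    + G (pile s 0) (pile s 1) (v :: pile q 1))).
  apply: eq_bigr => q _.
  by rewrite (sum_deal2_cons v (pile q 0) (fun a b => G a b (pile q 1))) -!big_split.
rewrite (IH (fun a b c => (G (v :: a) b c + G a (v :: b) c) + G a b (v :: c))).
apply: eq_bigr => q _.
rewrite (sum_deal2_cons v (pile q 1) (fun a b => G (pile q 0) a b)) -big_split /=.
by apply: eq_bigr => s _; rewrite addrA.
Qed.

Lemma sum_deal_split (R : zmodType) (w : seq V) n j (Phi : (nat -> seq V) -> R) :
  (j <= n)%N ->
  \sum_(p <- deal n.+1 w) Phi (pile p) =
  \sum_(q <- deal 2 w) \sum_(r <- deal n (pile q 0)) Phi (insert_pile j (pile q 1) (pile r)).
Proof.
elim: w Phi => [|v w IH] Phi le_jn.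
  rewrite !big_seq1 !pile_empty.
  congr Phi; apply: functional_extensionality => i; rewrite /insert_pile.
  by case: ifP => _ //; case: ifP.
rewrite sum_deal_cons (IH (fun g => \sum_(i <- iota 0 n.+1) Phi (push g i v)) le_jn).
rewrite (sum_deal2_cons v w (fun a b => \sum_(r <- deal n a) Phi (insert_pile j b (pile r)))).
apply: eq_bigr => q _.
rewrite (sum_deal_cons n v (pile q 0) (fun g => Phi (insert_pile j (pile q 1) g))).
by rewrite -big_split /=; apply: eq_bigr => r _; exact: sum_push_insert.
Qed.

Lemma sum_deal4 (R : zmodType) (w : seq V) (G : seq V -> seq V -> seq V -> seq V -> R) :
  \sum_(p <- deal 4 w) G (pile p 0) (pile p 1) (pile p 2) (pile p 3) =
  \sum_(q <- deal 2 w) \sum_(s <- deal 2 (pile q 0)) \sum_(r <- deal 2 (pile s 0))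
     G (pile r 0) (pile r 1) (pile s 1) (pile q 1).
Proof.
rewrite (sum_deal_split w (fun g => G (g 0%N) (g 1%N) (g 2%N) (g 3%N)) (leqnn 3)).
apply: eq_bigr => q _.
rewrite (sum_deal_split (pile q 0) (fun g => G (insert_pile 3 (pile q 1) g 0)
  (insert_pile 3 (pile q 1) g 1) (insert_pile 3 (pile q 1) g 2)
  (insert_pile 3 (pile q 1) g 3)) (leqnn 2)).
by apply: eq_bigr => s _; apply: eq_bigr => r _; rewrite /insert_pile.
Qed.

Lemma deal_one (u : seq V) : deal 1 u = [:: [:: u]].
Proof. by elim: u => [|v u IH] //=; rewrite IH. Qed.

End Dealing.

Section SymmetricMultilinear.
Variables (k : fieldType) (V W : lmodType k) (f : seq V -> W).
Hypothesis f_sml : SymMultilin f.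

Lemma sml_zero a1 a2 : f (a1 ++ 0 :: a2) = 0.
Proof.
have := f_sml.2 a1 a2 1 0 0; rewrite scaler0 addr0 scale1r => h.
by apply: (@addrI _ (f (a1 ++ 0 :: a2))); rewrite addr0 -h.
Qed.

Lemma sml_sum (I : Type) (r : seq I) (g : I -> V) a1 a2 :
  f (a1 ++ (\sum_(i <- r) g i) :: a2) = \sum_(i <- r) f (a1 ++ g i :: a2).
Proof.
elim: r => [|x r IH]; first by rewrite !big_nil sml_zero.
by rewrite !big_cons; have := f_sml.2 a1 a2 1 (g x) (\sum_(i <- r) g i);
   rewrite !scale1r IH.
Qed.

Lemma sml_cons c : SymMultilin (fun s => f (c :: s)).
Proof.
split=> [a b ab|a1 a2]; first by apply: f_sml.1; rewrite perm_cons.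
exact: (f_sml.2 (c :: a1) a2).
Qed.

Lemma sml_swap a b s : f (a :: b :: s) = f (b :: a :: s).
Proof. by apply: f_sml.1; rewrite -[a :: b :: s]/([:: a] ++ [:: b] ++ s) perm_catCA. Qed.

End SymmetricMultilinear.

Section DealingIntoSingletons.
Variables (k : fieldType) (V W : lmodType k).

Lemma sum_deal2_piV_head (u : seq V) n (K : seq V -> W) : SymMultilin K ->
  \sum_(q <- deal 2 u) (if size (pile q 0) == n then K (piVw (pile q 1) :: pile q 0) else 0)
  = if size u == n.+1 then n.+1%:R *: K u else 0.
Proof.
elim: u n K => [|v u IH] n K K_sml.
  rewrite big_seq1 !pile_empty /=.
  by case: ifP => _ //; exact: (sml_zero K_sml [::] [::]).
rewrite (sum_deal2_cons v u (fun a b => if size a == n then K (piVw b :: a) else 0)).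
rewrite big_split /=.
have -> : \sum_(q <- deal 2 u)
    (if size (pile q 0) == n then K (piVw (v :: pile q 1) :: pile q 0) else 0) =
    \sum_(q <- deal 2 u) (if pile q 1 is [::] then
       (if size (pile q 0) == n then K (v :: pile q 0) else 0) else 0).
  apply: eq_bigr => q _; case: (pile q 1) => [|a l] //=.
  by case: ifP => // _; exact: (sml_zero K_sml [::]).
rewrite (counit_deal2 u (fun a => if size a == n then K (v :: a) else 0)).
case: n => [|m].
  by rewrite big1 ?add0r //= scale1r.
have -> : \sum_(q <- deal 2 u)
    (if (size (pile q 0)).+1 == m.+1 then K (piVw (pile q 1) :: v :: pile q 0) else 0) =
    \sum_(q <- deal 2 u)
    (if size (pile q 0) == m then K (v :: piVw (pile q 1) :: pile q 0) else 0).
  by apply: eq_bigr => q _ /=; rewrite eqSS (sml_swap K_sml).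
rewrite (IH m _ (sml_cons K_sml v)) /= eqSS.
case: ifP => _; last by rewrite addr0.
by rewrite -[m.+2]addn1 natrD scalerDl scale1r.
Qed.

(* Applying pi_V to each of n piles kills all dealings except those into
   singletons, of which there are n! when w has n letters. *)
Lemma sum_deal_piV n (u : seq V) (K : seq V -> W) : SymMultilin K ->
  \sum_(r <- deal n u) K [seq piVw (pile r i) | i <- iota 0 n] =
  if size u == n then n`!%:R *: K u else 0.
Proof.
elim: n u K => [|n IH] u K K_sml.
  case: u => [|v u]; first by rewrite /= big_seq1 /= scale1r.
  rewrite (sum_deal_cons 0 v u (fun g => K [seq piVw (g i) | i <- iota 0 0])) /=.
  by rewrite big1 // => p _; rewrite big_nil.
rewrite (sum_deal_split u (fun g => K [seq piVw (g i) | i <- iota 0 n.+1]) (leq0n n)).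
have -> : \sum_(q <- deal 2 u) \sum_(r <- deal n (pile q 0))
    K [seq piVw (insert_pile 0 (pile q 1) (pile r) i) | i <- iota 0 n.+1] =
  \sum_(q <- deal 2 u) (n`!%:R *:
    (if size (pile q 0) == n then K (piVw (pile q 1) :: pile q 0) else 0)).
  apply: eq_bigr => q _.
  have head_pile r : [seq piVw (insert_pile 0 (pile q 1) (pile r) i) | i <- iota 0 n.+1]
      = piVw (pile q 1) :: [seq piVw (pile r i) | i <- iota 0 n].
    rewrite /= -[iota 1 n]/(iota (1 + 0) n) iotaDl -map_comp.
    by congr (_ :: _); apply: eq_map => i /=; rewrite add1n.
  under eq_bigr => r _ do rewrite head_pile.
  rewrite (IH (pile q 0) (fun s => K (piVw (pile q 1) :: s)) (sml_cons K_sml _)).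
  by case: ifP; rewrite ?scaler0.
rewrite -scaler_sumr sum_deal2_piV_head //; case: ifP; rewrite ?scaler0 // => _.
by rewrite scalerA -natrM mulnC -factS.
Qed.

End DealingIntoSingletons.

Section ProductByVector.
Variables (k : fieldType) (V W : lmodType k) (F : seq V -> seq V -> V).
Hypothesis F_unital : unital F.

Definition single_pile (j : nat) (y : V) : nat -> seq V := push (fun _ => [::]) j y.

Lemma sum_deal_letter (R : zmodType) m (y : V) (Phi : (nat -> seq V) -> R) :
  \sum_(p <- deal m [:: y]) Phi (pile p) = \sum_(j <- iota 0 m) Phi (single_pile j y).
Proof. by rewrite sum_deal_cons big_seq1 pile_empty. Qed.

Lemma perm_F_single_pile (y : V) n j b f : (j <= n)%N ->
  perm_eq [seq F (insert_pile j b f i) (single_pile j y i) | i <- iota 0 n.+1]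
          (F b [:: y] :: [seq piVw (f i) | i <- iota 0 n]).
Proof.
move=> le_jn.
rewrite (iota_cut_succ le_jn) (iota_cut le_jn).
rewrite !map_cat /= -map_comp /insert_pile /single_pile /push ltnn !eqxx.
have -> : [seq F (if (i < j)%N then f i else if i == j then b else f i.-1)
              (if i == j then [:: y] else [::]) | i <- iota 0 j] =
          [seq piVw (f i) | i <- iota 0 j].
  apply/eq_in_map => i; rewrite mem_iota /= => lt_ij.
  by rewrite lt_ij (ltn_eqF lt_ij) (F_unital _).1.
have -> : [seq ((fun i => F (if (i < j)%N then f i else if i == j then b else f i.-1)
              (if i == j then [:: y] else [::])) \o addn 1) i | i <- iota j (n - j)] =
          [seq piVw (f i) | i <- iota j (n - j)].
  apply/eq_in_map => i; rewrite mem_iota /= => /andP [le_ji _].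
  have lt_j1i : (j < 1 + i)%N by rewrite add1n ltnS.
  by rewrite ltnNge (ltnW lt_j1i) /= (gtn_eqF lt_j1i) add0n (F_unital _).1.
by rewrite -[_ :: [seq _ | _ <- iota j _]]cat1s perm_catCA.
Qed.

Lemma Fprime_vec_term (H : seq V -> W) (y : V) (w : seq V) n : SymMultilin H ->
  \sum_(pa <- deal n.+1 w) \sum_(pb <- deal n.+1 [:: y])
     H [seq F (pile pa i) (pile pb i) | i <- iota 0 n.+1] =
  n.+1`!%:R *: \sum_(q <- deal 2 w)
     (if size (pile q 0) == n then H (pile q 0 ++ [:: F (pile q 1) [:: y]]) else 0).
Proof.
move=> H_sml.
under eq_bigr => pa _ do rewrite (sum_deal_letter n.+1 y
  (fun g => H [seq F (pile pa i) (g i) | i <- iota 0 n.+1])).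
rewrite exchange_big.
transitivity (\sum_(j <- iota 0 n.+1) (n`!%:R *: \sum_(q <- deal 2 w)
     (if size (pile q 0) == n then H (pile q 0 ++ [:: F (pile q 1) [:: y]]) else 0))).
  apply: eq_big_seq => j; rewrite mem_iota add0n ltnS /= => le_jn.
  rewrite (sum_deal_split w (fun g => H [seq F (g i) (single_pile j y i) | i <- iota 0 n.+1]) le_jn).
  rewrite scaler_sumr; apply: eq_bigr => q _.
  under eq_bigr => r _ do rewrite (H_sml.1 _ _ (perm_F_single_pile y (pile q 1) (pile r) le_jn)).
  rewrite (sum_deal_piV n (pile q 0) (sml_cons H_sml (F (pile q 1) [:: y]))).
  case: ifP => _; rewrite ?scaler0 //.
  by congr (_ *: _); apply: H_sml.1; rewrite perm_sym -cat1s perm_catC.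
rewrite -[iota 0 n.+1]/(index_iota 0 n.+1) sumr_const_nat subn0 -scaler_nat.
by rewrite scalerA -natrM -factS.
Qed.

Lemma sum_iota_indicator (R : zmodType) N s (X : R) : (s < N)%N ->
  \sum_(m <- iota 0 N) (if s == m then X else 0) = X.
Proof.
move=> lt_sN; rewrite (bigD1_seq s) ?iota_uniq ?mem_iota //= eqxx big1 ?addr0 //.
by move=> m /negbTE; rewrite eq_sym => ->.
Qed.

(* F'(w (x) y) term by term; the term with no pile vanishes as y must go
   somewhere *)
Lemma sum_Fprime_vec (H : seq V -> W) (y : V) (w : seq V) :
  \sum_(r <- Fprime F w [:: y]) r.1 *: H r.2 =
  \sum_(n <- iota 0 (size w).+1) n.+1`!%:R^-1 *:
     \sum_(pa <- deal n.+1 w) \sum_(pb <- deal n.+1 [:: y])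
        H [seq F (pile pa i) (pile pb i) | i <- iota 0 n.+1].
Proof.
rewrite /Fprime big_flatten big_map addn1.
rewrite -[iota 0 (size w).+2]/(0%N :: iota (1 + 0) (size w).+1) iotaDl big_cons big_map.
rewrite big_allpairs_dep big1 ?Monoid.simpm; last by move=> pa _; rewrite big_nil.
apply: eq_bigr => n _; rewrite add1n big_allpairs_dep scaler_sumr.
by apply: eq_bigr => pa _; rewrite scaler_sumr.
Qed.

Lemma lext_Fprime_vec (H : seq V -> W) (y : V) (w : seq V) :
  [pchar k] =i pred0 -> SymMultilin H ->
  \sum_(r <- Fprime F w [:: y]) r.1 *: H r.2 =
  \sum_(q <- deal 2 w) H (pile q 0 ++ [:: F (pile q 1) [:: y]]).
Proof.
move=> char0 H_sml; rewrite sum_Fprime_vec.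
have fact_neq0 n : n`!%:R != 0 :> k by rewrite ((pcharf0P k).1 char0) -lt0n fact_gt0.
transitivity (\sum_(m <- iota 0 (size w).+1) \sum_(q <- deal 2 w)
     (if size (pile q 0) == m then H (pile q 0 ++ [:: F (pile q 1) [:: y]]) else 0)).
  by apply: eq_bigr => m _; rewrite Fprime_vec_term // scalerA mulVf ?scale1r.
rewrite exchange_big; apply: eq_big_seq => q q_deal.
by rewrite sum_iota_indicator // ltnS (size_pile_deal q_deal).
Qed.

End ProductByVector.

(* pi_V(F'(u (x) x)) = u * x : only the term with a single pile survives *)
Lemma piV_Fprime_vec (k : fieldType) (V : lmodType k) (F : seq V -> seq V -> V)
    (x : V) (u : seq V) :
  \sum_(r <- Fprime F u [:: x]) r.1 *: piVw r.2 = F u [:: x].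
Proof.
rewrite sum_Fprime_vec -[iota 0 (size u).+1]/(0%N :: iota 1 (size u)) big_cons.
rewrite !deal_one !big_seq1 /= invr1 scale1r.
rewrite big1_seq ?addr0 // => n /andP [_]; rewrite mem_iota => /andP [n_gt0 _].
rewrite big1 ?scaler0 // => pa _; rewrite big1 // => pb _.
by case: n n_gt0 => [|n] //=.
Qed.

Section AdaptedTorsion.
Variables (k : fieldType) (V : lmodType k).
Variables (F : seq V -> seq V -> V) (ld : seq V -> V -> V).
Hypotheses (F_bilin : is_bilinear_map F) (ld_div : is_left_division F ld).

Lemma nabla_adapted (A : seq V -> V) (y : V) (w : seq V) :
  nabla F ld A (adapted F y) w = 0.
Proof.
apply/eqP; rewrite /nabla /adapted subr_eq0; apply/eqP; symmetry.
rewrite (sum_deal4 w (fun a b c d => F (a ++ [:: A b]) [:: ld c (F d [:: y])])).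
rewrite (coassoc_deal2 w (fun a c b => \sum_(r <- deal 2 a)
   F (pile r 0 ++ [:: A (pile r 1)]) [:: ld c (F b [:: y])])) /=.
rewrite -(counit_deal2 w (fun a =>
   \sum_(p <- deal 2 a) F (pile p 0 ++ [:: A (pile p 1)]) [:: y])).
apply: eq_bigr => q _; rewrite exchange_big /=.
have left_division_unit r : \sum_(s <- deal 2 (pile q 1))
      F (pile r 0 ++ [:: A (pile r 1)]) [:: ld (pile s 0) (F (pile s 1) [:: y])]
    = F (pile r 0 ++ [:: A (pile r 1)]) [:: if pile q 1 is [::] then y else 0].
  by rewrite -ld_div.2.2.1 -(sml_sum (F_bilin.2 _) _ _ [::] [::]).
under eq_bigr => r _ do rewrite left_division_unit.
case: (pile q 1) => [|a l] //.
by rewrite big1 // => r _; exact: (sml_zero (F_bilin.2 _) [::] [::]).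
Qed.

(* hence the torsion of adapted fields is minus their bracket *)
Lemma torsion_adapted (x y : V) (w : seq V) :
  torsion F ld (adapted F x) (adapted F y) w =
  \sum_(q <- deal 2 w) F (pile q 0 ++ [:: F (pile q 1) [:: y]]) [:: x] -
  \sum_(q <- deal 2 w) F (pile q 0 ++ [:: F (pile q 1) [:: x]]) [:: y].
Proof.
rewrite /torsion !nabla_adapted subrr sub0r /bracket.
by rewrite big_split /= sumrN opprD opprK addrC.
Qed.

End AdaptedTorsion.

Section ProductsInKV.
Variables (k : fieldType) (V : lmodType k) (F : seq V -> seq V -> V).

Lemma lext_fmul_vec (g : seq V -> V) (nu : kV V) (z : V) :
  lext g (fmul F nu (vec z)) =
  \sum_(p <- nu) p.1 *: \sum_(r <- Fprime F p.2 [:: z]) r.1 *: g r.2.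
Proof.
rewrite /lext /fmul big_flatten big_allpairs_dep; apply: eq_bigr => p _.
rewrite big_seq1 big_map scaler_sumr; apply: eq_bigr => r _.
by rewrite /= mulr1 scalerA.
Qed.

Lemma piV_fmul_fmul_vec (x y : V) (mu : kV V) :
  [pchar k] =i pred0 -> is_bilinear_map F -> unital F ->
  piV (fmul F (fmul F mu (vec y)) (vec x)) =
  \sum_(p <- mu) p.1 *: \sum_(q <- deal 2 p.2) F (pile q 0 ++ [:: F (pile q 1) [:: y]]) [:: x].
Proof.
move=> char0 F_bilin F_unital; rewrite /piV lext_fmul_vec.
under eq_bigr => p _ do rewrite piV_Fprime_vec.
rewrite -/(lext (fun s => F s [:: x]) _) lext_fmul_vec; apply: eq_bigr => p _.
by rewrite (lext_Fprime_vec F_unital _ _ char0 (F_bilin.1 _)).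
Qed.

Lemma piV_ksub (mu nu : kV V) : piV (ksub mu nu) = piV mu - piV nu.
Proof.
rewrite /piV /lext /ksub big_cat big_map /= -sumrN.
by congr (_ + _); apply: eq_bigr => p _; rewrite scaleNr.
Qed.

End ProductsInKV.

Theorem mainTheorem11 (k : fieldType) (V : lmodType k)
    (F : seq V -> seq V -> V) (ld : seq V -> V -> V) :
  [pchar k] =i pred0 ->
  is_bilinear_map F ->
  unital F ->
  is_left_division F ld ->
  forall (x y : V) (mu : kV V),
    lext (torsion F ld (adapted F x) (adapted F y)) mu =
    piV (ksub (fmul F (fmul F mu (vec y)) (vec x))
              (fmul F (fmul F mu (vec x)) (vec y))).
Proof.
move=> char0 F_bilin F_unital ld_div x y mu.
rewrite piV_ksub !piV_fmul_fmul_vec // /lext -sumrB.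
by apply: eq_bigr => p _; rewrite torsion_adapted // scalerBr.
Qed.
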